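(* Let $\lambda=\bar p/(1-\bar p)$, $\pi=(1+\lambda)\mu(I-D_pK)$ and $\mathbf r=\big(I-K+\frac{(\mathbf 1-\mathbf p)\mu D_{1-p}K}{1-\bar p}\big)^{-1}\mathbf p-\lambda\mathbf 1$. Then $\pi\cdot\mathbf r=0$.
   Context: Let $\mathcal R=\{1,\dots,N\}$ and let $K$ be a stochastic matrix on $\mathcal R$ whose Markov chain has a unique closed irreducible subset; let $\mu$ (row vector) be its unique stationary distribution. Fix $p:\mathcal R\to(0,1)$, $\mathbf p=(p(1),\dots,p(N))^t$, $\mathbf 1$ the all-ones column vector, $I$ the identity, $D_p$ the diagonal matrix with entries $p(i)$, $D_{1-p}=I-D_p$, $\bar p=\mu\cdot\mathbf p$. *)

From mathcomp Require Import all_boot all_order all_algebra.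
Set Implicit Arguments. Unset Strict Implicit. Unset Printing Implicit Defensive.
Import Order.TTheory GRing.Theory Num.Theory.
Local Open Scope ring_scope.

Definition stochastic (R : realFieldType) (N : nat) (K : 'M[R]_N) : Prop :=
  (forall i j, 0 <= K i j) /\ (forall i, \sum_j K i j = 1).

Definition trans_rel (R : realFieldType) (N : nat) (K : 'M[R]_N) : rel 'I_N :=
  fun i j => 0 < K i j.

Definition closed_set (R : realFieldType) (N : nat) (K : 'M[R]_N) (C : {set 'I_N}) : Prop :=
  forall i j, i \in C -> 0 < K i j -> j \in C.

Definition irreducible_set (R : realFieldType) (N : nat) (K : 'M[R]_N) (C : {set 'I_N}) : Prop :=
  C != set0 /\ forall i j, i \in C -> j \in C -> connect (trans_rel K) i j.

Definition unique_closed_irreducible (R : realFieldType) (N : nat) (K : 'M[R]_N) : Prop :=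
  exists C : {set 'I_N},
    (closed_set K C /\ irreducible_set K C) /\
    forall C', closed_set K C' -> irreducible_set K C' -> C' = C.

Definition stationary_distribution (R : realFieldType) (N : nat) (K : 'M[R]_N) (mu : 'rV[R]_N) : Prop :=
  (forall i, 0 <= mu 0 i) /\ \sum_i mu 0 i = 1 /\ mu *m K = mu.

From mathcomp Require Import all_boot all_order all_algebra.
Set Implicit Arguments. Unset Strict Implicit. Unset Printing Implicit Defensive.
Import Order.TTheory GRing.Theory Num.Theory.
Local Open Scope ring_scope.

(* Since mu K = mu and mu 1 = 1, left multiplication by mu kills I - K and
   turns the rank-one correction (1 - p) w / (1 - pbar) into w = mu D_{1-p} K;
   the same row vector w is mu (I - D_p K), so pi = (1 + lambda) w and
   pi r = (1 + lambda) (mu p - lambda w 1) = (1 + lambda) (pbar - pbar) = 0.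
   The matrix M is invertible: M y = 0 forces w y = mu M y = 0, hence K y = y;
   a harmonic vector of a chain with a single closed class is constant (the
   states where it is maximal, resp. minimal, form a closed set, which must
   contain the closed class), and w 1 = 1 - pbar > 0 forces the constant to
   vanish. *)

Lemma unitmx_mulmx_eq0 (F : fieldType) (n : nat) (A : 'M[F]_n) :
  (forall y : 'cV_n, A *m y = 0 -> y = 0) -> A \in unitmx.
Proof.
move=> Aker; rewrite -unitmx_tr -row_free_unit -kermx_eq0.
apply/eqP/row_matrixP => i; rewrite row0; apply: trmx_inj; rewrite trmx0.
apply: Aker; rewrite -[A]trmxK -trmx_mul trmxK; apply/eqP; rewrite trmx_eq0.
by apply/eqP/sub_kermxP; apply: row_sub.
Qed.

Section ClosedSets.
Variables (R : realFieldType) (N : nat) (K : 'M[R]_N).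

Lemma closed_set_connect (S : {set 'I_N}) i j : closed_set K S ->
  connect (trans_rel K) i j -> i \in S -> j \in S.
Proof.
move=> cS /connectP [q + ->]; elim: q i => [|a q IH] i //= /andP [Kia Kq] iS.
exact: IH Kq (cS _ _ iS Kia).
Qed.

(* The reachable set of a state of S with fewest successors is closed and
   irreducible, hence equal to C. *)
Lemma closed_set_sub_unique (S C : {set 'I_N}) i0 :
  (forall C', closed_set K C' -> irreducible_set K C' -> C' = C) ->
  closed_set K S -> i0 \in S -> C \subset S.
Proof.
move=> uC cS i0S.
pose reach i := [set j | connect (trans_rel K) i j].
have [i iS imin] := arg_minnP (fun i => #|reach i|) i0S.
have reachS : reach i \subset S.
  by apply/subsetP => j; rewrite inE => /closed_set_connect; apply.
have cR : closed_set K (reach i).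
  by move=> j k; rewrite !inE => ij jk; apply: connect_trans ij (connect1 jk).
have iR : irreducible_set K (reach i).
  split; first by apply/set0Pn; exists i; rewrite inE connect0.
  move=> j k jR kR.
  have sub : reach j \subset reach i.
    by apply/subsetP => l; move: jR; rewrite !inE; apply: connect_trans.
  have /eqP reach_ji : reach j == reach i.
    by rewrite eqEcard sub imin //; apply: (subsetP reachS).
  by move: kR; rewrite -reach_ji inE.
by rewrite -(uC _ cR iR).
Qed.

End ClosedSets.

Section HarmonicVectors.
Variables (R : realFieldType) (N : nat) (K : 'M[R]_N).
Hypothesis hK : stochastic K.

Lemma stochastic_mulmx_const : K *m const_mx 1 = const_mx 1 :> 'cV_N.
Proof.
apply/matrixP => i j; rewrite !mxE -[RHS](proj2 hK i).
by apply: eq_bigr => k _; rewrite mxE mulr1.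
Qed.

Lemma closed_set_argmax (f : 'I_N -> R) m :
  (forall i, \sum_j K i j * f j = f i) -> (forall j, f j <= f m) ->
  closed_set K [set i | f i == f m].
Proof.
move=> hf fm i j; rewrite !inE => /eqP fi Kij.
have gap0 : \sum_k K i k * (f m - f k) = 0.
  under eq_bigr do rewrite mulrBr.
  by rewrite sumrB -big_distrl /= hf (proj2 hK) mul1r fi subrr.
have /eqP : K i j * (f m - f j) = 0.
  apply: (psumr_eq0P _ gap0) => // k _.
  by apply: mulr_ge0; [exact: (proj1 hK) | rewrite subr_ge0].
by rewrite mulf_eq0 (gt_eqF Kij) subr_eq0 eq_sym.
Qed.

Lemma harmonic_const (C : {set 'I_N}) c0 (f : 'I_N -> R) :
  (forall C', closed_set K C' -> irreducible_set K C' -> C' = C) ->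
  c0 \in C -> (forall i, \sum_j K i j * f j = f i) -> forall i, f i = f c0.
Proof.
move=> uC c0C.
have max_on_C g : (forall i, \sum_j K i j * g j = g i) ->
    forall i, g i <= g c0.
  move=> hg; have [m _ gm] := Order.TotalTheory.arg_maxP g (isT : xpredT c0).
  have gm' j : g j <= g m by exact: gm.
  have /subsetP CS : C \subset [set i | g i == g m].
    by apply: closed_set_sub_unique uC (closed_set_argmax hg gm') _; rewrite inE.
  by move=> i; have := CS c0 c0C; rewrite inE => /eqP ->.
move=> hf i; apply/eqP; rewrite eq_le max_on_C //= -lerN2.
apply: (max_on_C (fun j => - f j)) => k.
by rewrite -hf -sumrN; apply: eq_bigr => j _; rewrite mulrN.
Qed.

Lemma stochastic_fixed_const (y : 'cV[R]_N) :
  unique_closed_irreducible K -> K *m y = y -> exists c, y = c *: const_mx 1.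
Proof.
case=> C [[_ [/set0Pn [c0 c0C] _]] uC] Ky; exists (y c0 0).
have hf i : \sum_j K i j * y j 0 = y i 0.
  by rewrite -[in RHS]Ky mxE.
apply/matrixP => i j; rewrite (ord1 j) !mxE mulr1.
exact: (harmonic_const uC c0C hf).
Qed.

End HarmonicVectors.

Lemma stationary_mulmx_const (R : realFieldType) (N : nat) (K : 'M[R]_N) mu :
  stationary_distribution K mu -> mu *m const_mx 1 = 1%:M.
Proof.
case=> _ [musum _]; apply/matrixP => i j; rewrite !ord1 !mxE -[RHS]musum.
by apply: eq_bigr => k _; rewrite mxE mulr1.
Qed.

Lemma stationary_mean_lt1 (R : realFieldType) (N : nat) (K : 'M[R]_N) mu
    (p : 'I_N -> R) :
  stationary_distribution K mu -> (forall i, p i < 1) ->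
  (mu *m \col_i p i) 0 0 < 1.
Proof.
case=> mu_ge0 [musum _] p_lt1.
have p_gap i : 0 < 1 - p i by rewrite subr_gt0.
rewrite -subr_gt0.
have -> : 1 - (mu *m \col_i p i) 0 0 = \sum_i mu 0 i * (1 - p i).
  rewrite mxE -{1}musum -sumrB.
  by apply: eq_bigr => i _; rewrite mxE mulrBr mulr1.
rewrite lt_def sumr_ge0 ?andbT => [|i _]; last first.
  exact: mulr_ge0 (mu_ge0 i) (ltW (p_gap i)).
apply/eqP => /psumr_eq0P mu0; move/eqP: musum; apply/negP.
rewrite big1 1?eq_sym ?oner_eq0 // => i _.
have /eqP := mu0 (fun i _ => mulr_ge0 (mu_ge0 i) (ltW (p_gap i))) i isT.
by rewrite mulf_eq0 (gt_eqF (p_gap i)) orbF => /eqP.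
Qed.

Section RankOnePerturbation.
Variables (R : fieldType) (N : nat) (K : 'M[R]_N) (mu w : 'rV[R]_N).
Variable pcol : 'cV[R]_N.
Let one : 'cV[R]_N := const_mx 1.
Hypotheses (muK : mu *m K = mu) (muone : mu *m one = 1%:M).

Let pbar := (mu *m pcol) 0 0.
Let M := 1%:M - K + (1 - pbar)^-1 *: ((one - pcol) *m w).

Hypothesis pbar_neq1 : 1 - pbar != 0.

Lemma mulmx_perturbation : mu *m M = w.
Proof.
rewrite /M mulmxDr mulmxBr mulmx1 muK subrr add0r -scalemxAr mulmxA.
rewrite mulmxBr muone [mu *m pcol]mx11_scalar -raddfB mul_scalar_mx.
by rewrite scalerA mulVf // scale1r.
Qed.

Hypothesis K_fixed_const : forall y, K *m y = y -> exists c, y = c *: one.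
Hypothesis wone : w *m one = (1 - pbar)%:M.

Lemma perturbation_unitmx : M \in unitmx.
Proof.
apply: unitmx_mulmx_eq0 => y My.
have wy : w *m y = 0 by rewrite -mulmx_perturbation -mulmxA My mulmx0.
have /K_fixed_const [c yE] : K *m y = y.
  move/eqP: My; rewrite /M mulmxDl mulmxBl mul1mx -scalemxAl -mulmxA wy.
  by rewrite mulmx0 scaler0 addr0 subr_eq0 eq_sym => /eqP.
move: wy; rewrite yE -scalemxAr wone scale_scalar_mx.
move/(congr1 (fun A : 'M_1 => A 0 0)); rewrite !mxE mulr1n => /eqP.
by rewrite mulf_eq0 (negbTE pbar_neq1) orbF => /eqP ->; rewrite scale0r.
Qed.

Lemma mulmx_perturbation_corrector :
  w *m (invmx M *m pcol - (pbar / (1 - pbar)) *: one) = 0.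
Proof.
rewrite mulmxBr -scalemxAr wone -mulmx_perturbation -mulmxA.
rewrite mulKVmx ?perturbation_unitmx // [mu *m pcol]mx11_scalar.
by rewrite scale_scalar_mx divfK // subrr.
Qed.

End RankOnePerturbation.

Theorem corollary3p4 (R : realFieldType) (N : nat) (K : 'M[R]_N) (mu : 'rV[R]_N)
    (p : 'I_N -> R)
    (hK : stochastic K) (hU : unique_closed_irreducible K)
    (hmu : stationary_distribution K mu)
    (hp : forall i, 0 < p i < 1) :
  let pcol : 'cV[R]_N := \col_i p i in
  let one : 'cV[R]_N := const_mx 1 in
  let Dp : 'M[R]_N := diag_mx (\row_i p i) in
  let D1p : 'M[R]_N := diag_mx (\row_i (1 - p i)) in
  let pbar : R := (mu *m pcol) 0 0 in
  let lambda : R := pbar / (1 - pbar) in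
  let pi : 'rV[R]_N := (1 + lambda) *: (mu *m (1%:M - Dp *m K)) in
  let M : 'M[R]_N :=
    1%:M - K + (1 - pbar)^-1 *: ((one - pcol) *m (mu *m D1p *m K)) in
  let r : 'cV[R]_N := invmx M *m pcol - lambda *: one in
  M \in unitmx /\ pi *m r = 0.
Proof.
move=> pcol one Dp D1p pbar lambda pi M r.
have muK : mu *m K = mu by case: hmu => _ [].
have muone := stationary_mulmx_const hmu.
have pbar_neq1 : 1 - pbar != 0.
  rewrite subr_eq0 eq_sym lt_eqF // (stationary_mean_lt1 hmu) // => i.
  by case/andP: (hp i).
have D1pE : D1p = 1%:M - Dp.
  by rewrite -diag_const_mx -linearB; congr diag_mx; apply/rowP => i; rewrite !mxE.
have Dpone : Dp *m one = pcol by apply/colP => i; rewrite mul_diag_mx !mxE mulr1.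
have wone : mu *m D1p *m K *m one = (1 - pbar)%:M.
  rewrite -!mulmxA (stochastic_mulmx_const hK) D1pE mulmxBl mul1mx Dpone mulmxBr.
  by rewrite muone [mu *m pcol]mx11_scalar raddfB.
have Kfix y : K *m y = y -> exists c, y = c *: one by apply: stochastic_fixed_const.
split; first exact: perturbation_unitmx.
have wr0 : mu *m D1p *m K *m r = 0 by exact: mulmx_perturbation_corrector.
have wE : mu *m (1%:M - Dp *m K) = mu *m D1p *m K.
  by rewrite D1pE !mulmxBr !mulmx1 mulmxBl muK mulmxA.
by rewrite /pi wE -scalemxAl wr0 scaler0.
Qed.
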